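(* Consider $\dot x=f(x,u)$ with $x\in\mathbb{R}^n$, $f:\mathbb{R}^n\times\mathbb{R}^m\to\mathbb{R}^n$ continuous, $f(0,0)=0$, and suppose $V:\mathbb{R}^n\to\mathbb{R}_{\ge0}$ is a FxT-ISS Lyapunov function for this system. Let $\gamma\in\mathcal{K}^{\mathcal{P}^{-1}}$. Then there exists $\lambda\ge1$ such that $\tilde V(x)=\gamma^\lambda(V(x))=(\gamma(V(x)))^\lambda$ is a FxT-ISS Lyapunov function for the system.
   Context: $\mathcal{K}_\infty$: continuous strictly increasing unbounded $\alpha:\mathbb{R}_{\ge0}\to\mathbb{R}_{\ge0}$ with $\alpha(0)=0$. $\mathcal{K}^{\mathcal{P}}$: the $\alpha\in\mathcal{K}_\infty$ of the form $\sum_{i=1}^nc_is^{p_i}$ with real $c_i\ne0$, $p_i>0$, and $\alpha'(s)>0$ for $s>0$. $\mathcal{K}^{\mathcal{P}^{-1}}$: the $\alpha\in\mathcal{K}_\infty$ with $\alpha^{-1}\in\mathcal{K}^{\mathcal{P}}$. $\mathcal{K}_{\mathrm{FxT}}$: functions $c_1s^{p_1}+c_2s^{p_2}$ with $c_1,c_2>0$, $p_1\in(0,1)$, $p_2>1$. A locally Lipschitz $V:\mathbb{R}^n\to\mathbb{R}_{\ge0}$ is a FxT-ISS Lyapunov function for $\dot x=f(x,u)$ if there exist $\underline\alpha,\overline\alpha,\chi\in\mathcal{K}_\infty$ and $\Psi\in\mathcal{K}_{\mathrm{FxT}}$ with $\underline\alpha(|x|)\le V(x)\le\overline\alpha(|x|)$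 for all $x$ and, for all $x,u$, $V(x)\ge\chi(|u|)\implies DV(x;f(x,u))\le-\Psi(V(x))$, where $DV(x;v)=\limsup_{h\to0^+}\frac{V(x+hv)-V(x)}{h}$. *)

From HB Require Import structures.
From mathcomp Require Import all_boot all_order all_algebra.
From mathcomp Require Import all_classical all_reals all_analysis.
Set Implicit Arguments. Unset Strict Implicit. Unset Printing Implicit Defensive.
Import Order.TTheory GRing.Theory Num.Theory.
Import numFieldNormedType.Exports.
Local Open Scope classical_set_scope.
Local Open Scope ring_scope.

Section Defs.
Variable R : realType.

Definition enorm (k : nat) (v : 'rV[R]_k) : R :=
  Num.sqrt (\sum_(i < k) (v ord0 i) ^+ 2).

(* class K_infinity, for functions on R>=0 (values on negatives irrelevant) *)
Definition Kinf (a : R -> R) : Prop :=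
  [/\ a 0 = 0,
      {within `[0, +oo[, continuous a},
      (forall s t, 0 <= s -> s < t -> a s < a t) &
      (forall M, exists2 s, 0 <= s & M < a s)].

Definition KP (a : R -> R) : Prop :=
  Kinf a /\
  exists (N : nat) (c : 'I_N -> R) (p : 'I_N -> R),
    [/\ (forall i, c i != 0), (forall i, 0 < p i),
        (forall s, 0 <= s -> a s = \sum_(i < N) c i * powR s (p i)) &
        (forall s, 0 < s -> derivable a s 1 /\ 0 < derive1 a s)].

Definition KPinv (a : R -> R) : Prop :=
  Kinf a /\
  exists2 b : R -> R, KP b &
    (forall s, 0 <= s -> b (a s) = s) /\ (forall s, 0 <= s -> a (b s) = s).

Definition KFxT (psi : R -> R) : Prop :=
  exists c1 c2 p1 p2 : R,
    [/\ 0 < c1, 0 < c2, 0 < p1 < 1, 1 < p2 &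
        forall s, 0 <= s -> psi s = c1 * powR s p1 + c2 * powR s p2].

Definition locally_lipschitz (n : nat) (V : 'rV[R]_n -> R) : Prop :=
  forall x, exists r : R, exists L : R, 0 < r /\
    forall y z, enorm (y - x) < r -> enorm (z - x) < r ->
      `|V y - V z| <= L * enorm (y - z).

Definition dini (n : nat) (V : 'rV[R]_n -> R) (x v : 'rV[R]_n) : \bar R :=
  limf_esup (fun h : R => ((V (x + h *: v) - V x) / h)%:E) (0^'+).

Definition FxT_ISS_Lyapunov (n m : nat) (f : 'rV[R]_n -> 'rV[R]_m -> 'rV[R]_n)
  (V : 'rV[R]_n -> R) : Prop :=
  (forall x, 0 <= V x) /\ locally_lipschitz V /\
  exists al ah chi psi : R -> R,
    [/\ Kinf al, Kinf ah, Kinf chi, KFxT psi &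
        (forall x, al (enorm x) <= V x /\ V x <= ah (enorm x)) /\
        (forall x u, chi (enorm u) <= V x ->
           (dini V x (f x u) <= (- psi (V x))%:E)%E)].

End Defs.

From HB Require Import structures.
From mathcomp Require Import all_boot all_order all_algebra.
From mathcomp Require Import all_classical all_reals all_analysis.
From mathcomp Require Import ring lra.
Import Order.TTheory GRing.Theory Num.Theory.
Import numFieldNormedType.Exports.
Local Open Scope classical_set_scope.
Local Open Scope ring_scope.
Set Implicit Arguments. Unset Strict Implicit. Unset Printing Implicit Defensive.

(* Let [b := gamma^-1], a generalized polynomial [sum_i c_i s^(p_i)] with
   [b' > 0], and let [P] and [Q] be its lowest and highest exponents. Then
   [b t] and [t b'(t)] are both of order [t^P] near [0] and of order [t^Q]
   near [+oo]. Take [lam := P + 1] and [G := gamma^lam]; with [s = b t] we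
   have [G s = t^lam] and [G'(s) = lam t^lam / (t b'(t))].
   - [G'(s) = O(t)] near [0], so [G] is Lipschitz on bounded subsets of
     [[0, +oo[] and [G \o V] is locally Lipschitz;
   - the comparison functions of [V] composed with [G] serve for [G \o V];
   - by the chain rule for Dini derivatives [D(G \o V) <= - G'(s) psi(s)],
     and [G'(s) psi(s)] is at least a constant times [t^(lam + P (p1 - 1))]
     for [t <= 1] and [t^(lam + Q (p2 - 1))] for [t >= 1], that is, [G s]
     to the powers [1 - P (1 - p1) / lam < 1] and [1 + Q (p2 - 1) / lam > 1]:
     a fixed-time rate. *)

Section Kinf.
Variable R : realType.
Implicit Types (a g : R -> R) (s t : R).

Lemma within_continuous_comp_into (A B : set R) (f g : R -> R) :
  f @` A `<=` B -> {within A, continuous f} -> {within B, continuous g} ->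
  {within A, continuous (g \o f)}.
Proof.
move=> fAB /subspace_continuousP cf /subspace_continuousP cg.
apply/subspace_continuousP => x Ax; apply: cvg_comp (cg _ (fAB _ (imageP _ Ax))).
move=> U /(cf x Ax) BU; apply: (@filterS _ (nbhs x) _ _ _ _ BU) => z BU' Az.
by apply: (BU' Az); apply: fAB; exists z.
Qed.

Lemma Kinf_ge0 a s : Kinf a -> 0 <= s -> 0 <= a s.
Proof.
case=> a0 _ ainc _; rewrite le_eqVlt => /predU1P [<-|s0]; first by rewrite a0.
by rewrite -a0 ltW // ainc.
Qed.

Lemma Kinf_lt a s t : Kinf a -> 0 <= s -> s < t -> a s < a t.
Proof. by case=> _ _ ainc _; apply: ainc. Qed.

Lemma Kinf_le a s t : Kinf a -> 0 <= s -> s <= t -> a s <= a t.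
Proof.
move=> Ka s0; rewrite le_eqVlt => /predU1P [<-//|st].
exact/ltW/Kinf_lt.
Qed.

Lemma Kinf_le_inv a s t : Kinf a -> 0 <= t -> a s <= a t -> s <= t.
Proof. by move=> Ka t0; apply: contraLR; rewrite -!ltNge; apply: Kinf_lt. Qed.

Lemma Kinf_gt0 a s : Kinf a -> 0 < s -> 0 < a s.
Proof. by move=> Ka s0; case: (Ka) => <- _ _ _; apply: Kinf_lt. Qed.

Lemma Kinf_comp g a : Kinf g -> Kinf a -> Kinf (g \o a).
Proof.
move=> Kg Ka; have [a0 ca _ _] := Ka; have [g0 cg _ _] := Kg.
split => /=.
- by rewrite a0 g0.
- apply: within_continuous_comp_into ca cg => _ [s s0 <-].
  by move: s0; rewrite /= !in_itv /= !andbT; apply: Kinf_ge0.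
- by move=> s t s0 st; apply: (Kinf_lt Kg); [exact: Kinf_ge0 | exact: Kinf_lt].
- move=> M; case: (Kg) => _ _ _ /(_ M) [v v0 Mv].
  case: Ka => _ _ _ /(_ v) [s s0 vs].
  by exists s => //; exact: lt_trans Mv (Kinf_lt Kg v0 vs).
Qed.

Lemma powR_continuous (lam x : R) : 0 < x -> {for x, continuous (fun s => powR s lam)}.
Proof.
move=> x0; apply/differentiable_continuous/derivable1_diffP.
by apply: derivable_powR; rewrite in_itv /= x0.
Qed.

Lemma powR_within_continuous (lam : R) : 0 < lam ->
  {within `[0, +oo[, continuous (fun s : R => powR s lam)}.
Proof.
move=> lam0; apply/continuous_within_itvcyP; split.
  by move=> x; rewrite in_itv /= andbT; apply: powR_continuous.
by rewrite powR0 ?gt_eqF //; exact: powR_cvg0.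
Qed.

Lemma Kinf_powR (lam : R) : 0 < lam -> Kinf (fun s => powR s lam).
Proof.
move=> lam0; split.
- by rewrite powR0 // gt_eqF.
- exact: powR_within_continuous.
- by move=> s t s0 st; apply: gt0_ltr_powR; rewrite ?nnegrE // (le_trans s0) // ltW.
- move=> M; exists (powR (`|M| + 1) lam^-1); first exact: powR_ge0.
  rewrite -powRrM mulVf ?gt_eqF // powRr1; last by rewrite addr_ge0.
  by rewrite (le_lt_trans (ler_norm M)) // ltrDl.
Qed.

Lemma KFxT0 (psi : R -> R) : KFxT psi -> psi 0 = 0.
Proof.
case=> [c1 [c2 [p1 [p2 [_ _ /andP[p10 _] p21 ->]]]]] //.
by rewrite !powR0 ?mulr0 ?addr0 // gt_eqF // (lt_trans ltr01).
Qed.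

End Kinf.

Section Dini_derivative.
Variable R : realType.

Lemma enormZ k (h : R) (v : 'rV[R]_k) : enorm (h *: v) = `|h| * enorm v.
Proof.
rewrite /enorm -sqrtr_sqr -sqrtrM ?sqr_ge0 // big_distrr /=.
by congr Num.sqrt; apply: eq_bigr => i _; rewrite mxE exprMn.
Qed.

Lemma enorm_ge0 k (v : 'rV[R]_k) : 0 <= enorm v.
Proof. exact: sqrtr_ge0. Qed.

Lemma enorm0 k : enorm (0 : 'rV[R]_k) = 0.
Proof. by rewrite /enorm big1 ?sqrtr0 // => i _; rewrite mxE expr0n. Qed.

Lemma limf_esup_at_right_le (g : R -> R) c d : 0 < d ->
  (forall h, 0 < h -> h < d -> g h <= c) ->
  (limf_esup (fun h => (g h)%:E) 0^'+ <= c%:E)%E.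
Proof.
move=> d0 gc; rewrite limf_esupE.
apply: (@le_trans _ _ (ereal_sup ((fun h => (g h)%:E) @` [set h | 0 < h < d]))).
  apply: ereal_inf_lbound; exists [set h | 0 < h < d] => //.
  change (\forall h \near 0^'+, 0 < h < d); rewrite near_withinE.
  apply/nbhs_ballP; exists d => //= y.
  rewrite /ball /= sub0r normrN => yd y0; rewrite y0 /=.
  by rewrite (le_lt_trans _ yd) // ler_norm.
by apply: ge_ereal_sup => _ [h /andP[h0 hd] <-]; rewrite lee_fin gc.
Qed.

Lemma limf_esup_at_right_lt (g : R -> R) c :
  (limf_esup (fun h => (g h)%:E) 0^'+ <= c%:E)%E ->
  forall e, 0 < e -> exists2 d, 0 < d & forall h, 0 < h -> h < d -> g h < c + e.
Proof.
move=> gc e e0.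
have : (limf_esup (fun h => (g h)%:E) 0^'+ < (c + e)%:E)%E.
  by rewrite (le_lt_trans gc) // lte_fin ltrDl.
rewrite limf_esupE => /ereal_inf_lt [_ [A FA <-]] /= supA.
move: FA; change (0^'+ A) with (\forall h \near 0^'+, A h).
rewrite near_withinE => /nbhs_ballP [d /= d0 dA].
exists d => // h h0 hd; rewrite -lte_fin; apply: le_lt_trans supA.
apply: ereal_sup_ubound; exists h => //; apply: dA => //.
by rewrite /ball /= sub0r normrN gtr0_norm.
Qed.

(* The Lipschitz bound on [V] keeps the difference quotients of [V] bounded,
   so the [o(|s - V x|)] error of the expansion of [G] vanishes in the limit. *)
Lemma dini_comp_le n (V : 'rV[R]_n -> R) (G : R -> R) x v (D c : R) :
  (forall y, 0 <= V y) -> locally_lipschitz V -> 0 <= D ->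
  (forall eta, 0 < eta -> exists2 del, 0 < del & forall s, 0 <= s ->
     `|s - V x| < del -> G s - G (V x) <= D * (s - V x) + eta * `|s - V x|) ->
  (dini V x v <= c%:E)%E -> (dini (fun y => G (V y)) x v <= (D * c)%:E)%E.
Proof.
move=> V0 Vlip D0 dG dV; apply/lee_addgt0Pr => e e0; rewrite -EFinD.
have [r [L [r0 HL]]] := Vlip x.
pose K := `|L| * enorm v + 1.
have K0 : 0 < K by rewrite ltr_wpDl ?mulr_ge0 ?enorm_ge0.
have v1 : 0 < enorm v + 1 by rewrite ltr_wpDl ?enorm_ge0.
have eK0 : 0 < e / (2 * K) by rewrite divr_gt0 ?mulr_gt0.
have [del del0 Gdel] := dG _ eK0.
have D1 : 0 < 2 * (D + 1) by rewrite mulr_gt0 // ltr_wpDl.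
have [d d0 Vd] := limf_esup_at_right_lt dV (divr_gt0 e0 D1).
have d'0 : 0 < Num.min d (Num.min (r / (enorm v + 1)) (del / K)).
  by rewrite !lt_min d0 !divr_gt0.
apply: (limf_esup_at_right_le d'0) => h h0; rewrite !lt_min => /and3P[hd hr hdel].
set s := V (x + h *: v); have hV := Vd h h0 hd; rewrite -/s in hV.
have sK : `|s - V x| <= K * h.
  have hv : enorm (x + h *: v - x) < r.
    rewrite addrC addKr enormZ gtr0_norm //; rewrite ltr_pdivlMr // in hr.
    by apply: le_lt_trans hr; apply: ler_wpM2l; [exact: ltW | rewrite lerDl].
  have := HL _ x hv; rewrite subrr enorm0 => /(_ r0) Hs.
  apply: (le_trans Hs); rewrite addrC addKr enormZ gtr0_norm //.
  rewrite (le_trans (ler_norm _)) // normrM (ger0_norm (mulr_ge0 (ltW h0) (enorm_ge0 _))).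
  rewrite mulrCA mulrC; apply: ler_wpM2r; first exact: ltW.
  by rewrite /K lerDl.
rewrite ltr_pdivlMr // mulrC in hdel; have := Gdel s (V0 _) (le_lt_trans sK hdel).
rewrite ltr_pdivrMr // in hV; rewrite ler_pdivrMr //.
have eD : D * (e / (2 * (D + 1))) <= e / 2.
  have -> : D * (e / (2 * (D + 1))) = e / 2 * (D / (D + 1)).
    by field; rewrite gt_eqF // ltr_wpDl.
  apply: ler_piMr; first by rewrite divr_ge0 // ltW.
  by rewrite ler_pdivrMr ?mul1r ?lerDl // ltr_wpDl.
have eK : e / (2 * K) * `|s - V x| <= e / 2 * h.
  have -> : e / 2 * h = e / (2 * K) * (K * h) by field; rewrite gt_eqF.
  by apply: ler_wpM2l sK; exact: ltW.
have := ler_wpM2l D0 (ltW hV).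
nra.
Qed.

Lemma is_derive_approx (G : R -> R) (s0 D : R) : is_derive s0 1 G D ->
  forall eta, 0 < eta -> exists2 del, 0 < del & forall s, `|s - s0| < del ->
    `|G s - G s0 - D * (s - s0)| <= eta * `|s - s0|.
Proof.
case=> + <-; rewrite /derivable => /cvgrPdist_lt dG eta eta0.
have := dG eta eta0; rewrite near_withinE => /nbhs_ballP [d /= d0 Hd].
exists d => // s ss0; have [->|s0s] := eqVneq s s0.
  by rewrite !subrr mulr0 normr0 subrr normr0 mulr0.
have ss00 : s - s0 != 0 by rewrite subr_eq0.
have := Hd (s - s0); rewrite /ball /= sub0r normrN => /(_ ss0 ss00) /ltW /=.
rewrite /GRing.scale /= mulr1 subrK.
have -> : G s - G s0 - 'D_1 G s0 * (s - s0) =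
    - ((s - s0) * ('D_1 G s0 - (s - s0)^-1 * (G s - G s0))) by field.
rewrite normrN normrM => H; rewrite [leRHS]mulrC; exact: ler_wpM2l.
Qed.

End Dini_derivative.

Section sum_powR.
Variable R : realType.
Implicit Types (S : seq R) (A : R -> R).

Lemma near_at_right0P (P : R -> Prop) : (\forall t \near 0^'+, P t) ->
  exists2 t0, 0 < t0 & forall t, 0 < t -> t <= t0 -> P t.
Proof.
rewrite near_withinE => /nbhs_ballP [d /= d0 dP].
exists (d / 2) => [|t t0 td]; first by rewrite divr_gt0.
apply: dP => //; rewrite /ball /= sub0r normrN gtr0_norm //.
by rewrite (le_lt_trans td) // ltr_pdivrMr // ltr_pMr // ltr1n.
Qed.

Lemma sum_powR_small (r : seq R) (a d : R -> R) : (forall e, e \in r -> 0 < d e) ->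
  forall eps, 0 < eps -> exists2 t0, 0 < t0 & forall t, 0 < t -> t <= t0 ->
    \sum_(e <- r) `|a e| * powR t (d e) <= eps.
Proof.
move=> d0 eps eps0; apply: near_at_right0P.
have cvg0 : (fun t => \sum_(e <- r | e \in r) `|a e| * powR t (d e)) @ 0^'+ -->
    \sum_(e <- r | e \in r) `|a e| * 0.
  apply: cvg_big => [|e /d0 de]; first exact: add_continuous.
  by apply: cvgM; [exact: cvg_cst | exact: powR_cvg0].
rewrite big1 in cvg0; last by move=> *; rewrite mulr0.
by move/cvgr_le : cvg0 => /(_ eps eps0); apply: filterS => t; rewrite big_seq.
Qed.

Lemma powR_inv (t x : R) : 0 < t -> powR t^-1 x = powR t (- x).
Proof.
move=> t0; rewrite /powR (gt_eqF t0) gt_eqF ?invr_gt0 //.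
by rewrite lnV ?posrE // mulrN mulNr.
Qed.

Lemma sum_powR_lowest S A e0 : uniq S -> e0 \in S -> (forall e, e \in S -> e0 <= e) ->
  forall eps, 0 < eps -> exists2 t0, 0 < t0 & forall t, 0 < t -> t <= t0 ->
   `|\sum_(e <- S) A e * powR t e - A e0 * powR t e0| <= eps * powR t e0.
Proof.
move=> uS e0S e0_min eps eps0.
have [|t0 t00 small] := @sum_powR_small [seq e <- S | e != e0] A (fun e => e - e0) _ eps eps0.
  by move=> e; rewrite mem_filter subr_gt0 lt_def eq_sym => /andP[-> /e0_min].
exists t0 => // t t0' tt0; rewrite (bigD1_seq e0) //= addrAC subrr add0r -big_filter.
apply: le_trans (ler_norm_sum _ _ _) _; rewrite -ler_pdivrMr ?powR_gt0 // mulr_suml.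
apply: le_trans (small t t0' tt0); apply: ler_sum => e _.
by rewrite normrM (ger0_norm (powR_ge0 _ _)) -mulrA powRB // (gt_eqF t0') implybT.
Qed.

Lemma sum_powR_highest S A e0 : uniq S -> e0 \in S -> (forall e, e \in S -> e <= e0) ->
  forall eps, 0 < eps -> exists2 T0, 1 <= T0 & forall t, T0 <= t ->
   `|\sum_(e <- S) A e * powR t e - A e0 * powR t e0| <= eps * powR t e0.
Proof.
move=> uS e0S e0_max eps eps0.
have [|t0 t00 small] := @sum_powR_small [seq e <- S | e != e0] A (fun e => e0 - e) _ eps eps0.
  by move=> e; rewrite mem_filter subr_gt0 lt_def eq_sym => /andP[-> /e0_max].
exists (Num.max 1 t0^-1) => [|t]; first by rewrite le_max lexx.
rewrite ge_max => /andP[t1 tt0]; have t0' : 0 < t by rewrite (lt_le_trans ltr01).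
rewrite (bigD1_seq e0) //= addrAC subrr add0r -big_filter.
apply: le_trans (ler_norm_sum _ _ _) _; rewrite -ler_pdivrMr ?powR_gt0 // mulr_suml.
have := small t^-1; rewrite invr_gt0 invf_ple ?posrE // => /(_ t0' tt0).
apply: le_trans; apply: ler_sum => e _; rewrite powR_inv // opprB.
by rewrite normrM (ger0_norm (powR_ge0 _ _)) -mulrA powRB // (gt_eqF t0') implybT.
Qed.

Lemma mul_derive1_sum_powR (b : R -> R) N (c p : 'I_N -> R) t :
  (forall i, 0 < p i) -> (forall s, 0 <= s -> b s = \sum_(i < N) c i * powR s (p i)) ->
  0 < t -> t * derive1 b t = \sum_(i < N) c i * (p i * powR t (p i)).
Proof.
move=> p_gt0 b_sum t0; rewrite derive1E.
have -> : 'D_1 b t = 'D_1 (\sum_(i < N) (fun s => c i * powR s (p i))) t.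
  apply: near_eq_derive; near=> s; rewrite fct_sumE b_sum //.
  by apply: ltW; near: s; exact: lt_nbhsr.
have Dpow i : is_derive t 1 (fun s => c i * powR s (p i)) (c i * (p i * powR t (p i - 1))).
  exact: is_deriveZ (is_derive1_powR (p i) t0).
rewrite derive_sum => [|i]; last exact: (Dpow i).(ex_derive).
rewrite big_distrr /=; apply: eq_bigr => i _.
rewrite (Dpow i).(derive_val) mulrCA; congr (_ * _).
by rewrite mulrCA mulr_powRB1 // ltW.
Unshelve. all: end_near. Qed.

Lemma min_mulr_le (k1 k2 w y : R) : 0 <= w ->
  k1 * w <= y \/ k2 * w <= y -> Num.min k1 k2 * w <= y.
Proof.
by move=> w0 [] H; apply: le_trans H; apply: ler_wpM2r => //; rewrite ge_min lexx ?orbT.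
Qed.

Lemma powR_rescale_le (m T t e y : R) : 0 <= m -> 0 < t -> t <= T -> 0 <= e ->
  m <= y -> m / powR T e * powR t e <= y.
Proof.
move=> m0 t0 tT e0; have T0 := lt_le_trans t0 tT.
apply: le_trans; rewrite mulrAC -mulrA; apply: ler_piMr m0 _.
rewrite ler_pdivrMr ?powR_gt0 // mul1r.
by apply: ge0_ler_powR => //; rewrite nnegrE; exact: ltW.
Qed.

Lemma powR_term_le (lam A k M c p ct t D B : R) : 0 <= lam -> 0 <= c ->
  0 < t -> 0 < k -> 0 < p -> 0 <= ct -> 0 <= D -> D <= M * powR t A ->
  k * powR t A <= B -> 2 * M * ct <= lam * c * powR k p ->
  2 * ct * powR t (lam + A * (p - 1)) * D <= lam * powR t lam * (c * powR B p).
Proof.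
move=> lam0 c0 t0 k0 p0 ct0 D0 DM kB Mct.
set X := powR t (lam + A * (p - 1)); have X0 : 0 <= X := powR_ge0 _ _.
have XtA : X * powR t A = powR t lam * powR (powR t A) p.
  by rewrite -powRrM -!powRD ?(gt_eqF t0) ?implybT //; congr powR; ring.
have kB_p : powR k p * powR (powR t A) p <= powR B p.
  have ktA0 : 0 <= k * powR t A by rewrite mulr_ge0 ?powR_ge0 // ltW.
  rewrite -powRM ?powR_ge0 ?(ltW k0) //; apply: (ge0_ler_powR (ltW p0)); rewrite ?nnegrE //.
  exact: le_trans kB.
apply: (@le_trans _ _ (2 * M * ct * (X * powR t A))).
  have -> : 2 * M * ct * (X * powR t A) = 2 * ct * X * (M * powR t A) by ring.
  by apply: ler_wpM2l DM; rewrite !mulr_ge0.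
apply: (@le_trans _ _ (lam * c * powR k p * (X * powR t A))).
  by apply: ler_wpM2r Mct; rewrite mulr_ge0 ?powR_ge0.
rewrite XtA (_ : _ * _ = lam * powR t lam * (c * (powR k p * powR (powR t A) p))); last by ring.
by apply: ler_wpM2l (ler_wpM2l c0 kB_p); rewrite mulr_ge0 ?powR_ge0.
Qed.

End sum_powR.

Section sum_powR_bounds.
Variable R : realType.
Variables (S : seq R) (A : R -> R) (P Q : R).
Hypotheses (S_uniq : uniq S) (PS : P \in S) (QS : Q \in S).
Hypotheses (P_min : forall e, e \in S -> P <= e) (Q_max : forall e, e \in S -> e <= Q).
Local Notation f t := (\sum_(e <- S) A e * powR t e).

Lemma sum_powR_le_lowest t : 0 < t -> t <= 1 ->
  f t <= (\sum_(e <- S) `|A e|) * powR t P.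
Proof.
move=> t0 t1; rewrite mulr_suml !big_seq; apply: ler_sum => e eS.
rewrite (le_trans (ler_norm _)) // normrM (ger0_norm (powR_ge0 _ _)).
by apply: ler_wpM2l; [exact: normr_ge0 | apply: ger_powR; rewrite ?t0 ?t1 ?P_min].
Qed.

Lemma sum_powR_le_highest t : 1 <= t ->
  f t <= (\sum_(e <- S) `|A e|) * powR t Q.
Proof.
move=> t1; rewrite mulr_suml !big_seq; apply: ler_sum => e eS.
rewrite (le_trans (ler_norm _)) // normrM (ger0_norm (powR_ge0 _ _)).
by apply: ler_wpM2l; [exact: normr_ge0 | apply: ler_powR; rewrite ?Q_max].
Qed.

Lemma lowest_coef_gt0 : (forall t, 0 < t -> 0 < f t) -> A P != 0 -> 0 < A P.
Proof.
move=> f_gt0 AP0; have eps0 : 0 < `|A P| / 2 by rewrite divr_gt0 ?normr_gt0.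
have [t t0 /(_ t t0 (lexx _))] := sum_powR_lowest A S_uniq PS P_min eps0.
rewrite ler_distl => /andP[_ ft]; have ft0 := f_gt0 t t0; have w0 := powR_gt0 P t0.
rewrite lt_def AP0 leNgt /=; apply/negP => AP_lt0.
by rewrite ltr0_norm // in ft; nra.
Qed.

Lemma highest_coef_gt0 : (forall t, 0 < t -> 0 < f t) -> A Q != 0 -> 0 < A Q.
Proof.
move=> f_gt0 AQ0; have eps0 : 0 < `|A Q| / 2 by rewrite divr_gt0 ?normr_gt0.
have [T T1 /(_ T (lexx _))] := sum_powR_highest A S_uniq QS Q_max eps0.
have T0 : 0 < T by rewrite (lt_le_trans ltr01).
rewrite ler_distl => /andP[_ fT]; have fT0 := f_gt0 T T0; have w0 := powR_gt0 Q T0.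
rewrite lt_def AQ0 leNgt /=; apply/negP => AQ_lt0.
by rewrite ltr0_norm // in fT; nra.
Qed.

Lemma sum_powR_ge_lowest : 0 < A P -> exists2 t0, 0 < t0 &
  forall t, 0 < t -> t <= t0 -> A P / 2 * powR t P <= f t.
Proof.
move=> AP; have [t0 t00 approx] := sum_powR_lowest A S_uniq PS P_min (divr_gt0 AP (ltr0Sn _ 1)).
exists t0 => // t t0' tt0; move: (approx t t0' tt0); rewrite ler_distl => /andP[+ _].
by apply: le_trans; lra.
Qed.

Lemma sum_powR_ge_highest : 0 < A Q -> exists2 T, 1 <= T &
  forall t, T <= t -> A Q / 2 * powR t Q <= f t.
Proof.
move=> AQ; have [T T1 approx] := sum_powR_highest A S_uniq QS Q_max (divr_gt0 AQ (ltr0Sn _ 1)).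
exists T => // t tT; move: (approx t tT); rewrite ler_distl => /andP[+ _].
by apply: le_trans; lra.
Qed.

End sum_powR_bounds.

Section exponents.
Variables (R : realType) (N : nat).
Implicit Types (c p : 'I_N -> R).

Definition exponent_coef c p e := \sum_(i < N | p i == e) c i.

(* Equal exponents are merged and cancelling terms dropped, so that the
   lowest and the highest remaining terms dominate near [0] and [+oo]. *)
Definition exponents c p :=
  [seq e <- undup [seq p i | i <- enum 'I_N] | exponent_coef c p e != 0].

Lemma exponents_uniq c p : uniq (exponents c p).
Proof. by rewrite filter_uniq // undup_uniq. Qed.

Lemma exponent_coef_neq0 c p e : e \in exponents c p -> exponent_coef c p e != 0.
Proof. by rewrite mem_filter => /andP[]. Qed.

Lemma exponents_gt0 c p e : (forall i, 0 < p i) -> e \in exponents c p -> 0 < e.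
Proof. by move=> p_gt0; rewrite mem_filter mem_undup => /andP[_ /mapP[i _ ->]]. Qed.

Lemma sum_exponents c p (g : R -> R) :
  \sum_(i < N) c i * g (p i) = \sum_(e <- exponents c p) exponent_coef c p e * g e.
Proof.
rewrite big_filter [RHS]big_mkcond /=.
rewrite [RHS](eq_bigr (fun e => exponent_coef c p e * g e)) => [|e _]; last first.
  by case: eqP => // ->; rewrite mul0r.
under [RHS]eq_bigr do rewrite /exponent_coef big_distrl /= big_mkcond /=.
rewrite exchange_big /=; apply: eq_bigr => i _.
have pi : p i \in undup [seq p i | i <- enum 'I_N].
  by rewrite mem_undup; apply/mapP; exists i; rewrite ?mem_enum.
rewrite (bigD1_seq (p i)) ?undup_uniq //= eqxx big1 ?addr0 // => e.
by rewrite eq_sym => /negbTE ->.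
Qed.

End exponents.
Arguments exponents_uniq {R N c p}.

Section KP_bounds.
Variable R : realType.

Variables (b : R -> R) (N : nat) (c p : 'I_N -> R).
Hypotheses (Kb : Kinf b) (p_gt0 : forall i, 0 < p i).
Hypothesis b_sum : forall s, 0 <= s -> b s = \sum_(i < N) c i * powR s (p i).
Hypothesis b_der : forall s, 0 < s -> derivable b s 1 /\ 0 < derive1 b s.

Local Notation S := (exponents c p).
Local Notation C := (exponent_coef c p).

Lemma KP_exponent_sum t : 0 <= t -> b t = \sum_(e <- S) C e * powR t e.
Proof. by move=> t0; rewrite b_sum // (sum_exponents c p (powR t)). Qed.

Lemma KP_exponent_mul_derive1 t : 0 < t ->
  t * derive1 b t = \sum_(e <- S) C e * e * powR t e.
Proof.
move=> t0; rewrite (mul_derive1_sum_powR p_gt0 b_sum t0).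
rewrite (sum_exponents c p (fun e => e * powR t e)).
by apply: eq_bigr => e _; rewrite mulrA.
Qed.

Lemma exponents_neq_nil : S != [::].
Proof.
apply/eqP => S0; have := Kinf_gt0 Kb ltr01.
by rewrite KP_exponent_sum ?ler01 // S0 big_nil ltxx.
Qed.

Let P := \big[Num.min/head 0 S]_(e <- S) e.
Let Q := \big[Num.max/head 0 S]_(e <- S) e.

Lemma head_exponents_mem : head 0 S \in S.
Proof. by case: S exponents_neq_nil => // e s _; rewrite mem_head. Qed.

Lemma lowest_exponent_mem : P \in S.
Proof.
rewrite /P big_seq; apply: (big_ind (fun x => x \in S)) => [|x y xS yS|//].
  exact: head_exponents_mem.
by rewrite /Num.min; case: ifP.
Qed.

Lemma highest_exponent_mem : Q \in S.
Proof.
rewrite /Q big_seq; apply: (big_ind (fun x => x \in S)) => [|x y xS yS|//].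
  exact: head_exponents_mem.
by rewrite /Num.max; case: ifP.
Qed.

Lemma lowest_exponent_le e : e \in S -> P <= e.
Proof. by move=> eS; apply: ge_bigmin_seq. Qed.

Lemma highest_exponent_ge e : e \in S -> e <= Q.
Proof. by move=> eS; apply: le_bigmax_seq. Qed.

Lemma lowest_exponent_gt0 : 0 < P.
Proof. exact: exponents_gt0 p_gt0 lowest_exponent_mem. Qed.

Lemma highest_exponent_gt0 : 0 < Q.
Proof. exact: exponents_gt0 p_gt0 highest_exponent_mem. Qed.

Lemma KP_sum_gt0 t : 0 < t -> 0 < \sum_(e <- S) C e * powR t e.
Proof. by move=> t0; rewrite -KP_exponent_sum ?(ltW t0) // (Kinf_gt0 Kb t0). Qed.

Lemma KP_mul_derive1_gt0 t : 0 < t -> 0 < \sum_(e <- S) C e * e * powR t e.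
Proof. by move=> t0; rewrite -KP_exponent_mul_derive1 // mulr_gt0 // (b_der t0).2. Qed.

Lemma lowest_coef_gt0_KP : 0 < C P.
Proof.
apply: (lowest_coef_gt0 exponents_uniq lowest_exponent_mem lowest_exponent_le KP_sum_gt0).
exact/exponent_coef_neq0/lowest_exponent_mem.
Qed.

Lemma highest_coef_gt0_KP : 0 < C Q.
Proof.
apply: (highest_coef_gt0 exponents_uniq highest_exponent_mem highest_exponent_ge KP_sum_gt0).
exact/exponent_coef_neq0/highest_exponent_mem.
Qed.

Lemma KP_ge_lowest : exists2 k, 0 < k & forall t, 0 < t -> t <= 1 -> k * powR t P <= b t.
Proof.
have [t0 t00 near0] := sum_powR_ge_lowest (A := C) exponents_uniq lowest_exponent_mem
  lowest_exponent_le lowest_coef_gt0_KP.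
pose t1 := Num.min t0 1; have t10 : 0 < t1 by rewrite lt_min t00 ltr01.
exists (Num.min (C P / 2) (b t1)) => [|t t0' t1'].
  by rewrite lt_min divr_gt0 ?lowest_coef_gt0_KP // (Kinf_gt0 Kb t10).
apply: min_mulr_le; first exact: powR_ge0.
have [tt0|t0t] := leP t t0; [left | right].
  by rewrite KP_exponent_sum; [exact: near0 | exact: ltW].
have t1t : t1 <= t by rewrite ge_min (ltW t0t).
have := powR_rescale_le (Kinf_ge0 Kb (ltW t10)) t0' t1' (ltW lowest_exponent_gt0).
by rewrite powR1 divr1; apply; apply: Kinf_le (ltW t10) t1t.
Qed.

Lemma KP_ge_highest : exists2 k, 0 < k & forall t, 1 <= t -> k * powR t Q <= b t.
Proof.
have [T T1 nearoo] := sum_powR_ge_highest (A := C) exponents_uniq highest_exponent_mem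
  highest_exponent_ge highest_coef_gt0_KP.
have T0 : 0 < T by rewrite (lt_le_trans ltr01).
exists (Num.min (C Q / 2) (b 1 / powR T Q)) => [|t t1].
  by rewrite lt_min !divr_gt0 ?highest_coef_gt0_KP ?powR_gt0 // (Kinf_gt0 Kb ltr01).
have t0 : 0 < t by rewrite (lt_le_trans ltr01).
apply: min_mulr_le; first exact: powR_ge0.
have [Tt|tT] := leP T t; [left | right].
  by rewrite KP_exponent_sum; [exact: nearoo | exact: ltW].
apply: powR_rescale_le (ltW tT) (ltW highest_exponent_gt0) (Kinf_le Kb ler01 t1) => //.
exact: Kinf_ge0 ler01.
Qed.

Let M := \sum_(e <- S) `|C e * e|.

Lemma KP_mul_derive1_le_lowest t : 0 < t -> t <= 1 -> t * derive1 b t <= M * powR t P.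
Proof.
move=> t0 t1; rewrite KP_exponent_mul_derive1 //.
exact: (sum_powR_le_lowest (fun e => C e * e) lowest_exponent_le).
Qed.

Lemma KP_mul_derive1_le_highest t : 1 <= t -> t * derive1 b t <= M * powR t Q.
Proof.
move=> t1; rewrite KP_exponent_mul_derive1 ?(lt_le_trans ltr01) //.
exact: (sum_powR_le_highest (fun e => C e * e) highest_exponent_ge).
Qed.

Lemma KP_mul_derive1_coef_gt0 : 0 < M.
Proof.
have := KP_mul_derive1_le_lowest ltr01 (lexx _); rewrite powR1 mulr1.
by apply: lt_le_trans; rewrite mul1r (b_der ltr01).2.
Qed.

Lemma KP_mul_derive1_ge_lowest T : 0 < T -> exists2 kap, 0 < kap &
  forall t, 0 < t -> t <= T -> kap * powR t P <= t * derive1 b t.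
Proof.
move=> T0; have CP0 : 0 < C P * P by rewrite mulr_gt0 ?lowest_coef_gt0_KP ?lowest_exponent_gt0.
have [t0 t00 near0] := sum_powR_ge_lowest (A := fun e => C e * e) exponents_uniq
  lowest_exponent_mem lowest_exponent_le CP0.
pose F t := \sum_(e <- S) C e * e * powR t e.
pose T' := Num.max T t0; have t0T' : t0 <= T' by rewrite le_max lexx orbT.
have cF : {within `[t0, T'], continuous F}.
  apply: continuous_subspace_itv => x; rewrite in_itv /= => /andP[x0 _].
  apply: cvg_big => [|e _]; first exact: add_continuous.
  by apply: cvgM; [exact: cvg_cst | exact/powR_continuous/(lt_le_trans t00)].
have [m /[dup] + mI Fm] := EVT_min t0T' cF; rewrite in_itv /= => /andP[t0m _].
have m0 : 0 < m := lt_le_trans t00 t0m.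
exists (Num.min (C P * P / 2) (F m / powR T' P)) => [|t t0' tT].
  by rewrite lt_min !divr_gt0 ?powR_gt0 ?(KP_mul_derive1_gt0 m0) // (lt_le_trans t00).
rewrite KP_exponent_mul_derive1 //; apply: min_mulr_le; first exact: powR_ge0.
have [tt0|t0t] := leP t t0; [left | right]; first exact: near0.
apply: powR_rescale_le (ltW lowest_exponent_gt0) _ => //.
- exact/ltW/KP_mul_derive1_gt0.
- by rewrite (le_trans tT) // le_max lexx.
- by apply: Fm; rewrite in_itv /= (ltW t0t) (le_trans tT) // le_max lexx.
Qed.

End KP_bounds.

Lemma KP_growth (R : realType) (b : R -> R) : KP b -> exists P Q k M : R,
  [/\ 0 < P, 0 < Q, 0 < k, 0 < M &
  [/\ forall t, 0 < t -> t <= 1 -> k * powR t P <= b t,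
      forall t, 1 <= t -> k * powR t Q <= b t,
      forall t, 0 < t -> t <= 1 -> t * derive1 b t <= M * powR t P,
      forall t, 1 <= t -> t * derive1 b t <= M * powR t Q &
      forall T, 0 < T -> exists2 kap, 0 < kap &
        forall t, 0 < t -> t <= T -> kap * powR t P <= t * derive1 b t]].
Proof.
case=> Kb [N [c [p [_ p_gt0 b_sum b_der]]]].
have [k1 k10 low0] := KP_ge_lowest Kb p_gt0 b_sum.
have [k2 k20 lowoo] := KP_ge_highest Kb p_gt0 b_sum.
do 2 eexists; exists (Num.min k1 k2); eexists; split; last split.
- exact: lowest_exponent_gt0 Kb p_gt0 b_sum.
- exact: highest_exponent_gt0 Kb p_gt0 b_sum.
- by rewrite lt_min k10 k20.
- exact: KP_mul_derive1_coef_gt0 p_gt0 b_sum b_der.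
- by move=> t t0 t1; apply: min_mulr_le; [exact: powR_ge0 | left; exact: low0].
- by move=> t t1; apply: min_mulr_le; [exact: powR_ge0 | right; exact: lowoo].
- exact: KP_mul_derive1_le_lowest p_gt0 b_sum.
- exact: KP_mul_derive1_le_highest p_gt0 b_sum.
- exact: KP_mul_derive1_ge_lowest Kb p_gt0 b_sum b_der.
Qed.

Section KPinv_power.
Variable R : realType.
Variables (gam b : R -> R) (P Q k M : R).
Hypotheses (Kg : Kinf gam) (Kb : Kinf b).
Hypothesis b_der : forall t, 0 < t -> derivable b t 1 /\ 0 < derive1 b t.
Hypothesis b_gam : forall s, 0 <= s -> b (gam s) = s.
Hypothesis gam_b : forall t, 0 <= t -> gam (b t) = t.
Hypotheses (P_gt0 : 0 < P) (Q_gt0 : 0 < Q) (k_gt0 : 0 < k) (M_gt0 : 0 < M).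
Hypothesis b_ge_lowest : forall t, 0 < t -> t <= 1 -> k * powR t P <= b t.
Hypothesis b_ge_highest : forall t, 1 <= t -> k * powR t Q <= b t.
Hypothesis Db_le_lowest : forall t, 0 < t -> t <= 1 -> t * derive1 b t <= M * powR t P.
Hypothesis Db_le_highest : forall t, 1 <= t -> t * derive1 b t <= M * powR t Q.
Hypothesis Db_ge_lowest : forall T, 0 < T -> exists2 kap, 0 < kap &
  forall t, 0 < t -> t <= T -> kap * powR t P <= t * derive1 b t.

Local Notation lam := (P + 1).
Local Notation G s := (powR (gam s) lam).

Fact lam_gt0 : 0 < lam.
Proof. by rewrite ltr_wpDl // ltW. Qed.

Lemma Kinf_G : Kinf (fun s => G s).
Proof. exact: Kinf_comp (Kinf_powR lam_gt0) Kg. Qed.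

Lemma powR_sub_le_sub T : 0 < T -> exists2 L, 0 <= L &
  forall t t', 0 <= t -> t <= t' -> t' <= T ->
    powR t' lam - powR t lam <= L * (b t' - b t).
Proof.
move=> T0; have [kap kap0 Db_ge] := Db_ge_lowest T0.
pose L := lam * T / kap; pose h x := L * b x - powR x lam.
have L0 : 0 <= L by rewrite divr_ge0 ?mulr_ge0 // ltW // lam_gt0.
exists L => // t t' t0 tt' t'T; suff : h t <= h t' by rewrite /h; lra.
have Dh (x : R) : 0 < x -> is_derive x 1 h (L * derive1 b x - lam * powR x P).
  move=> x0; rewrite -[in powR x P](addrK 1 P).
  apply: is_deriveB; last exact: is_derive1_powR.
  by apply: is_deriveZ; rewrite derive1E; apply: derivableP; exact: (b_der x0).1.
apply: (@ger0_derive1_ndecr _ h 0 T) => // [x|x|].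
- by rewrite in_itv /= => /andP[x0 _]; exact: (Dh x x0).(ex_derive).
- rewrite in_itv /= => /andP[x0 xT]; rewrite derive1E (Dh x x0).(derive_val) subr_ge0.
  rewrite -(ler_pM2r x0) (_ : _ * derive1 b x * x = L * (x * derive1 b x)); last by ring.
  apply: le_trans (ler_wpM2l L0 (Db_ge x x0 (ltW xT))).
  rewrite (_ : L * _ = lam * powR x P * T); last by rewrite /L; field; rewrite gt_eqF.
  by apply: ler_wpM2l (ltW xT); rewrite mulr_ge0 ?powR_ge0 // ltW // lam_gt0.
- apply: continuous_subspaceW (within_continuousB _ (powR_within_continuous lam_gt0)).
    by move=> x /=; rewrite !in_itv /= => /andP[->].
  by case: Kb => _ cb _ _; apply: within_continuous_comp cb => y _; exact: mulrl_continuous.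
Qed.

Lemma G_lipschitz S : 0 <= S -> exists2 L, 0 <= L &
  forall s s', 0 <= s -> s <= S -> 0 <= s' -> s' <= S -> `|G s - G s'| <= L * `|s - s'|.
Proof.
move=> S0; have T0 : 0 < gam S + 1 by rewrite ltr_wpDl ?Kinf_ge0.
have [L L0 HL] := powR_sub_le_sub T0; exists L => //.
have G_sub (s s' : R) : 0 <= s -> s <= s' -> s' <= S -> G s' - G s <= L * (s' - s).
  move=> s0 ss' s'S; have s'0 := le_trans s0 ss'.
  rewrite -{2}(b_gam s0) -{2}(b_gam s'0); apply: HL; first exact: Kinf_ge0.
    exact: Kinf_le.
  by rewrite (le_trans (Kinf_le Kg s'0 s'S)) // lerDl.
move=> s s' s0 sS s'0 s'S; wlog ss' : s s' s0 sS s'0 s'S / s <= s'.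
  move=> wl; have [|/ltW s's] := leP s s'; first exact: wl.
  by rewrite distrC (distrC s); apply: wl.
rewrite distrC (distrC s) !ger0_norm ?subr_ge0 //; first exact: G_sub.
exact: Kinf_le Kinf_G s0 ss'.
Qed.

Lemma G_is_derive (s : R) : 0 < s ->
  is_derive s 1 (fun s => G s) (lam * powR (gam s) P / derive1 b (gam s)).
Proof.
move=> s0; set t := gam s; have t0 : 0 < t := Kinf_gt0 Kg s0.
have [db Db0] := b_der t0.
have Dgam : is_derive s 1 gam (derive1 b t)^-1.
  rewrite -[s in is_derive s](b_gam (ltW s0)); apply: is_derive_inverse.
  - by near=> y; apply: gam_b; apply: ltW; near: y; exact: lt_nbhsr.
  - near=> y; apply/differentiable_continuous/derivable1_diffP.
    by apply: (b_der _).1; near: y; exact: lt_nbhsr.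
  - by rewrite derive1E; apply: derivableP.
  - by rewrite gt_eqF.
have := is_derive1_comp (is_derive1_powR lam t0) Dgam.
by rewrite addrK.
Unshelve. all: end_near. Qed.

Definition decay_exp_lo (p1 : R) := 1 - P * (1 - p1) / lam.
Definition decay_exp_hi (p2 : R) := 1 + Q * (p2 - 1) / lam.
Definition decay_coef (c1 c2 p1 p2 : R) :=
  Num.min (lam * c1 * powR k p1) (lam * c2 * powR k p2) / (2 * M).
Definition decay_rate (c1 c2 p1 p2 w : R) :=
  decay_coef c1 c2 p1 p2 * powR w (decay_exp_lo p1) +
  decay_coef c1 c2 p1 p2 * powR w (decay_exp_hi p2).

Lemma decay_rate_le (c1 c2 p1 p2 t : R) :
  0 < c1 -> 0 < c2 -> 0 < p1 -> p1 < 1 -> 1 < p2 -> 0 < t ->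
  decay_rate c1 c2 p1 p2 (powR t lam) * (t * derive1 b t)
  <= lam * powR t lam * (c1 * powR (b t) p1 + c2 * powR (b t) p2).
Proof.
move=> c10 c20 p10 p11 p21 t0; rewrite /decay_rate; set ct := decay_coef _ _ _ _.
have M2 : 0 < 2 * M by rewrite mulr_gt0.
have ct0 : 0 <= ct.
  by rewrite divr_ge0 ?(ltW M2) // le_min !mulr_ge0 ?powR_ge0 ?(ltW lam_gt0) ?ltW.
have Mct : 2 * M * ct = Num.min (lam * c1 * powR k p1) (lam * c2 * powR k p2).
  by rewrite /ct /decay_coef mulrC divfK ?gt_eqF.
have D0 : 0 <= t * derive1 b t := mulr_ge0 (ltW t0) (ltW (b_der t0).2).
have cb0 (c p : R) : 0 < c -> 0 <= c * powR (b t) p.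
  by move=> c0; rewrite mulr_ge0 ?powR_ge0 // ltW.
rewrite -!powRrM.
have -> : lam * decay_exp_lo p1 = lam + P * (p1 - 1).
  by rewrite /decay_exp_lo; field; rewrite gt_eqF ?lam_gt0.
have -> : lam * decay_exp_hi p2 = lam + Q * (p2 - 1).
  by rewrite /decay_exp_hi; field; rewrite gt_eqF ?lam_gt0.
set lo := lam + P * (p1 - 1); set hi := lam + Q * (p2 - 1).
have lo_le_hi : lo <= hi.
  rewrite lerD2l (@le_trans _ _ 0) //.
    by rewrite mulr_ge0_le0 ?subr_le0 ?(ltW P_gt0) ?(ltW p11).
  by rewrite mulr_ge0 ?subr_ge0 ?(ltW Q_gt0) ?(ltW p21).
have lam_t0 : 0 <= lam * powR t lam by rewrite mulr_ge0 ?powR_ge0 // ltW // lam_gt0.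
have [t1|t1] := leP t 1.
- have tE : powR t hi <= powR t lo by apply: ger_powR; rewrite ?t0.
  apply: (@le_trans _ _ (2 * ct * powR t lo * (t * derive1 b t))).
    by apply: ler_wpM2r => //; have := ler_wpM2l ct0 tE; lra.
  have Mct1 : 2 * M * ct <= lam * c1 * powR k p1 by rewrite Mct ge_min lexx.
  apply: le_trans (powR_term_le (ltW lam_gt0) (ltW c10) t0 k_gt0 p10 ct0 D0
    (Db_le_lowest t0 t1) (b_ge_lowest t0 t1) Mct1) _.
  by apply: ler_wpM2l => //; rewrite lerDl cb0.
- have tE : powR t lo <= powR t hi by apply: ler_powR => //; exact: ltW.
  apply: (@le_trans _ _ (2 * ct * powR t hi * (t * derive1 b t))).
    by apply: ler_wpM2r => //; have := ler_wpM2l ct0 tE; lra.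
  have Mct2 : 2 * M * ct <= lam * c2 * powR k p2 by rewrite Mct ge_min lexx orbT.
  apply: le_trans (powR_term_le (ltW lam_gt0) (ltW c20) t0 k_gt0 (lt_trans ltr01 p21) ct0 D0
    (Db_le_highest (ltW t1)) (b_ge_highest (ltW t1)) Mct2) _.
  by apply: ler_wpM2l => //; rewrite lerDr cb0.
Qed.

Lemma decay_rate_le_derive (c1 c2 p1 p2 s : R) :
  0 < c1 -> 0 < c2 -> 0 < p1 -> p1 < 1 -> 1 < p2 -> 0 < s ->
  decay_rate c1 c2 p1 p2 (G s) <=
    lam * powR (gam s) P / derive1 b (gam s) * (c1 * powR s p1 + c2 * powR s p2).
Proof.
move=> c10 c20 p10 p11 p21 s0; set t := gam s; have t0 : 0 < t := Kinf_gt0 Kg s0.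
have Db0 := (b_der t0).2; rewrite -(ler_pM2r (mulr_gt0 t0 Db0)).
have -> : lam * powR t P / derive1 b t * (c1 * powR s p1 + c2 * powR s p2) * (t * derive1 b t)
    = lam * powR t lam * (c1 * powR s p1 + c2 * powR s p2).
  rewrite powRD ?(gt_eqF t0) ?implybT // powRr1 ?(ltW t0) //.
  by field; rewrite gt_eqF.
by have := decay_rate_le c10 c20 p10 p11 p21 t0; rewrite b_gam // ltW.
Qed.

Lemma decay_rate_KFxT (c1 c2 p1 p2 : R) : 0 < c1 -> 0 < c2 -> 0 < p1 < 1 -> 1 < p2 ->
  KFxT (decay_rate c1 c2 p1 p2).
Proof.
move=> c10 c20 /andP[p10 p11] p21.
have ct0 : 0 < decay_coef c1 c2 p1 p2.
  by rewrite divr_gt0 ?mulr_gt0 // lt_min !mulr_gt0 ?powR_gt0 ?lam_gt0 // (lt_trans ltr01).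
exists (decay_coef c1 c2 p1 p2), (decay_coef c1 c2 p1 p2), (decay_exp_lo p1), (decay_exp_hi p2).
split => //; rewrite /decay_exp_lo /decay_exp_hi.
- have q0 : 0 < P * (1 - p1) / lam by rewrite divr_gt0 ?mulr_gt0 ?subr_gt0 ?lam_gt0.
  have q1 : P * (1 - p1) / lam < 1.
    by rewrite ltr_pdivrMr ?lam_gt0 // mul1r; have := mulr_gt0 P_gt0 p10; lra.
  by apply/andP; split; lra.
- by rewrite ltrDl divr_gt0 ?mulr_gt0 ?subr_gt0 ?lam_gt0.
Qed.

Lemma G_locally_lipschitz n (V : 'rV[R]_n -> R) : (forall y, 0 <= V y) ->
  locally_lipschitz V -> locally_lipschitz (fun x => G (V x)).
Proof.
move=> V0 Vlip x; have [r [L [r0 HL]]] := Vlip x.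
have V_le y : enorm (y - x) < r -> V y <= V x + `|L| * r.
  move=> yx; have := HL y x yx; rewrite subrr enorm0 => /(_ r0) /(le_trans (ler_norm _)).
  have : L * enorm (y - x) <= `|L| * r.
    apply: le_trans (ler_norm _) _; rewrite normrM (ger0_norm (enorm_ge0 _)).
    by apply: ler_wpM2l; [exact: normr_ge0 | exact: ltW].
  lra.
have [LG LG0 GL] := G_lipschitz (addr_ge0 (V0 x) (mulr_ge0 (normr_ge0 L) (ltW r0))).
exists r, (LG * L); split => // y z yx zx.
apply: le_trans (GL _ _ (V0 y) (V_le y yx) (V0 z) (V_le z zx)) _.
by rewrite -mulrA; apply: ler_wpM2l => //; exact: HL.
Qed.

Lemma G_dini_le n (V : 'rV[R]_n -> R) x v (psi : R -> R) (c1 c2 p1 p2 : R) :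
  0 < c1 -> 0 < c2 -> 0 < p1 < 1 -> 1 < p2 ->
  (forall s, 0 <= s -> psi s = c1 * powR s p1 + c2 * powR s p2) ->
  (forall y, 0 <= V y) -> locally_lipschitz V ->
  (dini V x v <= (- psi (V x))%:E)%E ->
  (dini (fun y => G (V y)) x v <= (- decay_rate c1 c2 p1 p2 (G (V x)))%:E)%E.
Proof.
move=> c10 c20 p1_itv p21 psiE V0 Vlip dV; have /andP[p10 p11] := p1_itv.
have := V0 x; rewrite le_eqVlt => /predU1P[Vx0|Vx_gt0].
- (* At [V x = 0] a Lipschitz constant of [G] can play the role of [G'],
     because [psi 0 = 0]. *)
  have [L L0 GL] := G_lipschitz ler01.
  have dG eta : 0 < eta -> exists2 del, 0 < del & forall s, 0 <= s -> `|s - V x| < del ->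
      G s - G (V x) <= L * (s - V x) + eta * `|s - V x|.
    move=> eta0; exists 1 => // s s0; rewrite -Vx0 subr0 ger0_norm // => s1.
    have := GL s 0 s0 (ltW s1) (lexx 0) ler01; rewrite subr0 (ger0_norm s0).
    move=> /(le_trans (ler_norm _)) GLs; have := mulr_ge0 (ltW eta0) s0; lra.
  apply: le_trans (dini_comp_le V0 Vlip L0 dG dV) _.
  have G0 : G 0 = 0 by case: Kg => -> _ _ _; rewrite powR0 // gt_eqF // lam_gt0.
  rewrite -Vx0 psiE // G0 (KFxT0 (decay_rate_KFxT c10 c20 p1_itv p21)).
  by rewrite !powR0 ?gt_eqF ?(lt_trans ltr01 p21) // !mulr0 addr0 oppr0 mulr0.
- pose D := lam * powR (gam (V x)) P / derive1 b (gam (V x)).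
  have DG : is_derive (V x) 1 (fun s => G s) D := G_is_derive Vx_gt0.
  have t0 : 0 < gam (V x) := Kinf_gt0 Kg Vx_gt0.
  have D0 : 0 <= D.
    by rewrite divr_ge0 ?mulr_ge0 ?powR_ge0 ?(ltW lam_gt0) ?(ltW (b_der t0).2).
  have dG eta : 0 < eta -> exists2 del, 0 < del & forall s, 0 <= s -> `|s - V x| < del ->
      G s - G (V x) <= D * (s - V x) + eta * `|s - V x|.
    move=> eta0; have [del del0 approx] := is_derive_approx DG eta0.
    by exists del => // s _ /approx /(le_trans (ler_norm _)); lra.
  apply: le_trans (dini_comp_le V0 Vlip D0 dG dV) _.
  by rewrite lee_fin mulrN lerN2 (psiE _ (ltW Vx_gt0)); exact: decay_rate_le_derive.
Qed.

Lemma FxT_ISS_Lyapunov_G n m (f : 'rV[R]_n -> 'rV[R]_m -> 'rV[R]_n) (V : 'rV[R]_n -> R) :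
  FxT_ISS_Lyapunov f V -> FxT_ISS_Lyapunov f (fun x => G (V x)).
Proof.
case=> V0 [Vlip [al [ah [chi [psi [Kal Kah Kchi KFxT_psi [Vbd Vdec]]]]]]].
have [c1 [c2 [p1 [p2 [c10 c20 p1_itv p21 psiE]]]]] := KFxT_psi.
split; first by move=> x; exact: powR_ge0.
split; first exact: G_locally_lipschitz.
exists (fun s => G (al s)), (fun s => G (ah s)), (fun s => G (chi s)).
exists (decay_rate c1 c2 p1 p2); split; last split.
- exact: Kinf_comp Kinf_G Kal.
- exact: Kinf_comp Kinf_G Kah.
- exact: Kinf_comp Kinf_G Kchi.
- exact: decay_rate_KFxT.
- move=> x; have [alV Vah] := Vbd x.
  by split; apply: (Kinf_le Kinf_G) => //; exact: Kinf_ge0 (enorm_ge0 _).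
- move=> x u /(Kinf_le_inv Kinf_G (V0 x)) /Vdec; exact: G_dini_le.
Qed.

End KPinv_power.

Local Close Scope classical_set_scope.

Theorem lemma8 (R : realType) (n m : nat)
  (f : 'rV[R]_n -> 'rV[R]_m -> 'rV[R]_n)
  (Hf : continuous (fun p : 'rV[R]_n * 'rV[R]_m => f p.1 p.2))
  (Hf0 : f 0 0 = 0)
  (V : 'rV[R]_n -> R)
  (HV : FxT_ISS_Lyapunov f V)
  (gamma : R -> R) (Hgamma : KPinv gamma) :
  exists2 lam : R, 1 <= lam &
    FxT_ISS_Lyapunov f (fun x => powR (gamma (V x)) lam).
Proof.
have [Kg [b KPb [b_gam gam_b]]] := Hgamma.
have [P [Q [k [M [P0 Q0 k0 M0 [b_lo b_hi Db_lo Db_hi Db_ge]]]]]] := KP_growth KPb.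
have [Kb [? [? [? [_ _ _ b_der]]]]] := KPb.
exists (P + 1); first by rewrite lerDr ltW.
exact: (FxT_ISS_Lyapunov_G Kg Kb b_der b_gam gam_b P0 Q0 k0 M0 b_lo b_hi Db_lo Db_hi Db_ge HV).
Qed.
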